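(* For every $k\in\mathbb N_{>0}$, there exists a $2$-cell $\mathrm{tel}_k$ of the free weak $\omega$-category generated by the computad $\mathrm{Tel}_k$ whose source is the unbiased composite $f_1\ast_0 f_2\ast_0\cdots\ast_0 f_k\ast_0 g_k\ast_0\cdots\ast_0 g_1$ of the $2k$ consecutive $1$-cells $f_1,\dots,f_k,g_k,\dots,g_1$ (formally, the image of the unbiased composition cell over the chain of $2k$ consecutive $1$-cells under the morphism sending the $i$-th $1$-position to $f_i$ for $i\le k$ and to $g_{2k-i+1}$ for $k<i\le 2k$), and whose target is the identity $\mathrm{id}(x_0)$.
   Context: Computads (Dean et al.) are generating data for weak $\omega$-categories: a set of generators in each dimension, each $n$-generator attached to a pair of parallel $(n-1)$-cells of the free weak $\omega$-category on the lower-dimensional generators. $\mathrm{Tel}_k$ is the $2$-computad with $0$-generators $x_0,\dots,x_k$, $1$-generators $f_i\colon x_{i-1}\to x_i$ and $g_i\colon x_i\to x_{i-1}$ for $1\le i\le k$, $2$-generators $\alpha_i\colon f_i\ast_0 g_i\to\mathrm{id}(x_{i-1})$ for $1\le i\le k$, and no higher generators; here $\ast_0$ is the canonical binary composition of $1$-cells and $\mathrm{id}$ the canonical identity. The unbiased composite of a chain of consecutive $1$-cells is the canonical composition operation over the Batanin tree of the chain (a pasting diagram $\bullet\to\bullet\to\cdots\to\bullet$). *)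

From mathcomp Require Import all_boot.
Set Implicit Arguments. Unset Strict Implicit. Unset Printing Implicit Defensive.

Inductive tree : Type := br : seq tree -> tree.
Definition leaf : tree := br [::].

Fixpoint tdim (B : tree) : nat :=
  let: br L := B in
  let fix go (L : seq tree) : nat :=
      match L with
      | [::] => 0
      | T :: L' => maxn (tdim T).+1 (go L')
      end in
  go L.

(* A position of dimension d is a list [:: i_1; ...; i_d; j]: descend into
   child i_1, then child i_2, ..., then take the 0-position j there. *)
Definition pos := seq nat.

Fixpoint positions (B : tree) : seq pos :=
  match B with
  | br L => mkseq (fun j => [:: j]) (size L).+1 ++
      (fix go (i : nat) (L : seq tree) : seq pos :=
         match L with
         | [::] => [::]
         | T :: L' => map (cons i) (positions T) ++ go i.+1 L'
         end) 0 L
  end.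

Fixpoint psrc (p : pos) : pos :=
  match p with
  | i :: [:: _] => [:: i]
  | i :: p' => i :: psrc p'
  | [::] => [::]
  end.
Fixpoint ptgt (p : pos) : pos :=
  match p with
  | i :: [:: _] => [:: i.+1]
  | i :: p' => i :: ptgt p'
  | [::] => [::]
  end.

Fixpoint bdry (n : nat) (B : tree) {struct B} : tree :=
  match n, B with
  | 0, _ => leaf
  | n'.+1, br L => br (map (bdry n') L)
  end.

Fixpoint sincl (n : nat) (B : tree) (p : pos) {struct n} : pos :=
  match n, B with
  | 0, _ => [:: 0]
  | n'.+1, br L =>
      match p with
      | [:: j] => [:: j]
      | i :: p' => i :: sincl n' (nth leaf L i) p'
      | [::] => [::]
      end
  end.
Fixpoint tincl (n : nat) (B : tree) (p : pos) {struct n} : pos :=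
  match n, B with
  | 0, br L => [:: size L]
  | n'.+1, br L =>
      match p with
      | [:: j] => [:: j]
      | i :: p' => i :: tincl n' (nth leaf L i) p'
      | [::] => [::]
      end
  end.

Definition simg (n : nat) (B : tree) : seq pos := [seq sincl n B q | q <- positions (bdry n B)].
Definition timg (n : nat) (B : tree) : seq pos := [seq tincl n B q | q <- positions (bdry n B)].

Definition chain (m : nat) : tree := br (nseq m leaf).

(* coh B U W tau : coherence over the tree B, for the sphere (U,W) of
   Free(B), with the morphism Free(B) -> C given by tau, listing the image
   of each position of B in the order of [positions B]. *)
Inductive term (V : Type) : Type :=
| var : V -> term V
| coh : tree -> term pos -> term pos -> seq (term V) -> term V.
Arguments var {V} _.
Arguments coh {V} _ _ _ _.

Definition junk {V : Type} : term V := coh leaf (var [:: 0]) (var [:: 0]) [::].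

Definition lookup {V : Type} (B : tree) (tau : seq (term V)) (p : pos) : term V :=
  nth junk tau (index p (positions B)).

Fixpoint subst {V : Type} (B : tree) (tau : seq (term V)) (t : term pos) : term V :=
  match t with
  | var p => lookup B tau p
  | coh B' U W s => coh B' U W (map (subst B tau) s)
  end.

Record computad := Computad {
  gen : Type;
  isgen : gen -> Prop;
  gdim : gen -> nat;
  gsrc : gen -> term gen;
  gtgt : gen -> term gen }.
Arguments isgen : clear implicits.
Arguments gdim : clear implicits.
Arguments gsrc : clear implicits.
Arguments gtgt : clear implicits.

Definition csrc (C : computad) (t : term (gen C)) : term (gen C) :=
  match t with
  | var v => gsrc C v
  | coh B U _ tau => subst B tau U
  end.
Definition ctgt (C : computad) (t : term (gen C)) : term (gen C) :=
  match t with
  | var v => gtgt C v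
  | coh B _ W tau => subst B tau W
  end.

Definition treeComp (B : tree) : computad :=
  @Computad pos (fun p => p \in positions B) (fun p => (size p).-1)
            (fun p => var (psrc p)) (fun p => var (ptgt p)).
Arguments csrc : clear implicits.
Arguments ctgt : clear implicits.

Inductive below (q : pos) : pos -> Prop :=
| below_refl : below q q
| below_src p : 1 < size p -> below q (psrc p) -> below q p
| below_tgt p : 1 < size p -> below q (ptgt p) -> below q p.

Fixpoint seqIn {A : Type} (x : A) (s : seq A) : Prop :=
  if s is y :: s' then y = x \/ seqIn x s' else False.

Inductive in_supp (q : pos) : term pos -> Prop :=
| supp_var p : below q p -> in_supp q (var p)
| supp_coh B U W s t : seqIn t s -> in_supp q t -> in_supp q (coh B U W s).

Definition full (B : tree) (n : nat) (U W : term pos) : Prop :=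
  (tdim B = n.+1 /\ (forall q, in_supp q U <-> q \in simg n B)
                 /\ (forall q, in_supp q W <-> q \in timg n B))
  \/ ((forall q, in_supp q U <-> q \in positions B)
      /\ (forall q, in_supp q W <-> q \in positions B)).

(* wf C n t : t is an n-cell of the free weak omega-category on C *)
Unset Implicit Arguments.
Inductive wf : forall C : computad, nat -> term (gen C) -> Prop :=
| wf_var (C : computad) (n : nat) (v : gen C) :
    isgen C v -> gdim C v = n -> wf C n (var v)
| wf_coh (C : computad) (n : nat) (B : tree) (U W : term pos) (tau : seq (term (gen C))) :
    wf (treeComp B) n U -> wf (treeComp B) n W ->
    (0 < n -> csrc (treeComp B) U = csrc (treeComp B) W) ->
    (0 < n -> ctgt (treeComp B) U = ctgt (treeComp B) W) ->
    full B n U W ->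
    size tau = size (positions B) ->
    (forall p, p \in positions B -> wf C (size p).-1 (lookup B tau p)) ->
    (forall p, p \in positions B -> 1 < size p ->
        csrc C (lookup B tau p) = lookup B tau (psrc p)) ->
    (forall p, p \in positions B -> 1 < size p ->
        ctgt C (lookup B tau p) = lookup B tau (ptgt p)) ->
    wf C n.+1 (coh B U W tau).
Set Implicit Arguments.

Definition ucell (m : nat) : term pos :=
  coh (chain m) (var [:: 0]) (var [:: m]) (map var (positions (chain m))).
Definition idcell : term pos := coh leaf (var [:: 0]) (var [:: 0]) [:: var [:: 0]].

Inductive telgen : Type :=
| TX of nat
| TF of nat
| TG of nat
| TA of nat.

Definition hA (i : nat) (p : pos) : term telgen :=
  match p with
  | [:: 0] => var (TX i.-1)
  | [:: 1] => var (TX i)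
  | [:: 2] => var (TX i.-1)
  | [:: 0; 0] => var (TF i)
  | [:: 1; 0] => var (TG i)
  | _ => var (TX 0)
  end.

Definition tel_src (v : telgen) : term telgen :=
  match v with
  | TX _ => var (TX 0) (* unused: 0-generators have no boundary *)
  | TF i => var (TX i.-1)
  | TG i => var (TX i)
  | TA i => subst (chain 2) [seq hA i p | p <- positions (chain 2)] (ucell 2)
  end.
Definition tel_tgt (v : telgen) : term telgen :=
  match v with
  | TX _ => var (TX 0)
  | TF i => var (TX i)
  | TG i => var (TX i.-1)
  | TA i => subst leaf [:: var (TX i.-1)] idcell
  end.
Definition tel_isgen (k : nat) (v : telgen) : Prop :=
  match v with
  | TX i => i <= k
  | TF i | TG i | TA i => 0 < i <= k
  end.
Definition tel_dim (v : telgen) : nat :=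
  match v with TX _ => 0 | TF _ | TG _ => 1 | TA _ => 2 end.

Definition Tel (k : nat) : computad :=
  @Computad telgen (tel_isgen k) tel_dim tel_src tel_tgt.

(* morphism Free(chain 2k) -> Tel_k: i-th 1-position (1-based) |-> f_i for
   i <= k, g_{2k-i+1} for k < i <= 2k; vertices accordingly *)
Definition htel (k : nat) (p : pos) : term telgen :=
  match p with
  | [:: j] => var (TX (if j <= k then j else k.*2 - j))
  | [:: i; _] => var (if i < k then TF i.+1 else TG (k.*2 - i))
  | _ => var (TX 0)
  end.
Definition telsub (k : nat) : seq (term telgen) :=
  [seq htel k p | p <- positions (chain k.*2)].

From mathcomp Require Import all_boot zify.
Set Implicit Arguments. Unset Strict Implicit.

(* [tel k] is a vertical composite of k steps zigzag (c+1) => zigzag c, for c = k-1, ..., 0,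
   where zigzag c = f_1 ... f_c g_c ... g_1 and zigzag 0 = id(x_0). Each step is itself a
   vertical composite of three 2-cells
     f_1 ... f_(c+1) g_(c+1) ... g_1  =>  f_1 ... f_c (f_(c+1) *_0 g_(c+1)) g_c ... g_1
       =>  f_1 ... f_c id(x_c) g_c ... g_1  =>  f_1 ... f_c g_c ... g_1.
   The middle one is alpha_(c+1) whiskered by the f's and the g's. The outer two are
   coherence cells over a chain of 1-cells: they exist because both sides of their spheres
   use every position of the chain, so the spheres are full. *)

(** * Positions of Batanin trees *)

Lemma lookup_map V B (g : pos -> term V) p :
  p \in positions B -> lookup B (map g (positions B)) p = g p.
Proof. by move=> Bp; rewrite /lookup (nth_map p) ?index_mem ?nth_index. Qed.

Fixpoint child_positions (i : nat) (L : seq tree) : seq pos :=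
  if L is T :: L' then map (cons i) (positions T) ++ child_positions i.+1 L' else [::].

Lemma positions_br L :
  positions (br L) = mkseq (fun j => [:: j]) (size L).+1 ++ child_positions 0 L.
Proof. by congr cat; move: 0; elim: L => //= T L IH i; rewrite IH. Qed.

Lemma mem_child_positions i L p :
  p \in child_positions i L <->
  exists j q, [/\ j < size L, q \in positions (nth leaf L j) & p = (i + j) :: q].
Proof.
elim: L i p => [|T L IH] i p /=; first by split=> // [[j [q []]]].
rewrite mem_cat; split.
- case/orP=> [/mapP[q Tq ->]|]; first by exists 0, q; rewrite addn0.
  by case/IH=> j [q [jL Lq ->]]; exists j.+1, q; rewrite addnS.
- case=> [[|j]] [q [jL Lq ->]]; first by rewrite addn0 map_f.
  by apply/orP; right; apply/IH; exists j, q; rewrite addnS.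
Qed.

Lemma mem_br L p :
  p \in positions (br L) <->
  (exists2 j, j <= size L & p = [:: j]) \/
  (exists j q, [/\ j < size L, q \in positions (nth leaf L j) & p = j :: q]).
Proof.
rewrite positions_br mem_cat; split.
- case/orP=> [/mapP[j]|]; last by move/mem_child_positions; right.
  by rewrite mem_iota => /andP[_ jL] ->; left; exists j.
- case=> [[j jL ->]|?]; last by apply/orP; right; apply/mem_child_positions.
  by apply/orP; left; apply/mapP; exists j; rewrite // mem_iota.
Qed.

Lemma positions_neq0 B p : p \in positions B -> p != [::].
Proof. by case: B => L /mem_br[[j _ ->]|[j [q [_ _ ->]]]]. Qed.

Lemma mem_psrc B p : p \in positions B -> 1 < size p -> psrc p \in positions B.
Proof.
elim: p B => [|i p IH] [L] //; case/mem_br=> [[j _ [_ ->]] //|[j [q [jL Lq [-> pq]]]]]; subst p.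
case: q IH Lq => [_ /positions_neq0 //|y [|z r]] IH Lq _.
  by apply/mem_br; left; exists j => //; exact: ltnW.
by apply/mem_br; right; exists j, (psrc [:: y, z & r]); split=> //; apply: IH.
Qed.

Lemma mem_ptgt B p : p \in positions B -> 1 < size p -> ptgt p \in positions B.
Proof.
elim: p B => [|i p IH] [L] //; case/mem_br=> [[j _ [_ ->]] //|[j [q [jL Lq [-> pq]]]]]; subst p.
case: q IH Lq => [_ /positions_neq0 //|y [|z r]] IH Lq _.
  by apply/mem_br; left; exists j.+1.
by apply/mem_br; right; exists j, (ptgt [:: y, z & r]); split=> //; apply: IH.
Qed.

Lemma mem_leaf p : (p \in positions leaf) = (p == [:: 0]).
Proof. by rewrite inE. Qed.

Lemma mem_chain m p :
  p \in positions (chain m) <->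
  (exists2 j, j <= m & p = [:: j]) \/ (exists2 j, j < m & p = [:: j; 0]).
Proof.
rewrite mem_br size_nseq; split=> [[|[j [q [jm]]]]|[|[j jm ->]]]; try by left.
- by rewrite nth_nseq if_same mem_leaf => /eqP-> ->; right; exists j.
- by right; exists j, [:: 0]; rewrite nth_nseq if_same.
Qed.

Lemma chain_vertex m j : j <= m -> [:: j] \in positions (chain m).
Proof. by move=> jm; apply/mem_chain; left; exists j. Qed.

Lemma chain_edge m j : j < m -> [:: j; 0] \in positions (chain m).
Proof. by move=> jm; apply/mem_chain; right; exists j. Qed.

Lemma tdim_br L : tdim (br L) = foldr (fun T d => maxn (tdim T).+1 d) 0 L.
Proof. by elim: L => //= T L ->. Qed.

Lemma tdim_chain m : 0 < m -> tdim (chain m) = 1.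
Proof. by case: m => // m _; rewrite tdim_br /=; elim: m => //= m ->. Qed.

(** * Unbiased composites and supports *)

Definition ccomp {V : Type} (m : nat) (g : pos -> term V) : term V :=
  coh (chain m) (var [:: 0]) (var [:: m]) (map g (positions (chain m))).

(* The identity is the nullary composite: [chain 0] is [leaf], so [idc x] is [idcell]
   transported along x. *)
Definition idc {V : Type} (x : term V) : term V := ccomp 0 (fun _ => x).

Lemma ucellE m : ucell m = ccomp m var.
Proof. by []. Qed.

Lemma below_trans p q r : below p q -> below q r -> below p r.
Proof.
move=> pq; elim=> // s s1 _ IH; [exact: below_src | exact: below_tgt].
Qed.

Lemma below_positions B p q : below q p -> p \in positions B -> q \in positions B.
Proof.
by elim=> // s s1 _ IH Bs; apply: IH; [exact: mem_psrc | exact: mem_ptgt].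
Qed.

Lemma below_vertex q j : below q [:: j] <-> q = [:: j].
Proof. by split=> [|->]; [inversion 1 | constructor]. Qed.

Lemma below_edge q j y : below q [:: j; y] <-> [\/ q = [:: j; y], q = [:: j] | q = [:: j.+1]].
Proof.
split=> [|[->|->|->]].
- inversion 1 as [|r _ qr|r _ qr]; first by constructor 1.
    by move/below_vertex: qr ->; constructor 2.
  by move/below_vertex: qr ->; constructor 3.
- by constructor.
- by apply: below_src => //; constructor.
- by apply: below_tgt => //; constructor.
Qed.

Lemma in_supp_var q p : in_supp q (var p) <-> below q p.
Proof. by split=> [|?]; [inversion 1 | constructor]. Qed.

Lemma in_supp_refl p : in_supp p (var p).
Proof. exact/in_supp_var/below_refl. Qed.

Lemma in_supp_below p q t : in_supp p t -> below q p -> in_supp q t.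
Proof.
elim=> [r pr|B U W s u su _ IH] qp; first by constructor; apply: below_trans qp pr.
exact: supp_coh su (IH qp).
Qed.

Lemma seqIn_map (A : eqType) B (f : A -> B) (s : seq A) t :
  seqIn t (map f s) <-> exists2 x, x \in s & f x = t.
Proof.
elim: s t => [|a s IH] t /=; first by split=> // [[]].
split=> [[<-|]|[x]]; first by exists a; rewrite ?mem_head.
  by move/IH=> [x sx <-]; exists x; rewrite // inE sx orbT.
by rewrite inE => /orP[/eqP-> <-|sx <-]; [left | right; apply/IH; exists x].
Qed.

Lemma in_supp_coh_map (A : eqType) q B U W (g : A -> term pos) s :
  in_supp q (coh B U W (map g s)) <-> exists2 p, p \in s & in_supp q (g p).
Proof.
split=> [|[p sp qg]]; last by apply: supp_coh qg; apply/seqIn_map; exists p.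
inversion 1 as [|? ? ? ? t st qt]; case/seqIn_map: st => p sp gp.
by exists p; rewrite ?gp.
Qed.

Definition supported (B : tree) (t : term pos) : Prop :=
  forall q, in_supp q t -> q \in positions B.

Definition covers (B : tree) (t : term pos) : Prop :=
  forall q, in_supp q t <-> q \in positions B.

Lemma supported_var B p : p \in positions B -> supported B (var p).
Proof. by move=> Bp q /in_supp_var/below_positions; apply. Qed.

Lemma in_supp_ccomp q m (g : pos -> term pos) :
  in_supp q (ccomp m g) <-> exists2 p, p \in positions (chain m) & in_supp q (g p).
Proof. exact: in_supp_coh_map. Qed.

Lemma supported_ccomp B m g :
  (forall p, p \in positions (chain m) -> supported B (g p)) -> supported B (ccomp m g).
Proof. by move=> Bg q /in_supp_ccomp[p mp]; apply: Bg. Qed.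

Lemma covers_ucell m : covers (chain m) (ucell m).
Proof.
move=> q; rewrite ucellE; split; first exact: (supported_ccomp (@supported_var _)).
by move=> mq; apply/in_supp_ccomp; exists q => //; apply: in_supp_refl.
Qed.

Lemma covers_chain m t :
  supported (chain m) t -> in_supp [:: 0] t ->
  (forall j, j < m -> in_supp [:: j; 0] t) -> covers (chain m) t.
Proof.
move=> mt t0 tedge q; split; first exact: mt.
case/mem_chain=> [[[|j] jm ->] //|[j jm ->]]; last exact: tedge.
by apply: in_supp_below (tedge j jm) _; apply/below_edge; constructor 3.
Qed.

(** * Cells over pasting diagrams *)

Definition arrow (C : computad) (n : nat) (u s t : term (gen C)) : Prop :=
  [/\ wf C n.+1 u, csrc C u = s & ctgt C u = t].

Definition tree_morphism (C : computad) (B : tree) (g : pos -> term (gen C)) : Prop :=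
  forall p, p \in positions B ->
  [/\ wf C (size p).-1 (g p),
      1 < size p -> csrc C (g p) = g (psrc p)
    & 1 < size p -> ctgt C (g p) = g (ptgt p)].

Arguments arrow : clear implicits.
Arguments tree_morphism : clear implicits.

Lemma arrow_coh C n B U W g :
  wf (treeComp B) n U -> wf (treeComp B) n W ->
  (0 < n -> csrc (treeComp B) U = csrc (treeComp B) W) ->
  (0 < n -> ctgt (treeComp B) U = ctgt (treeComp B) W) ->
  full B n U W -> tree_morphism C B g ->
  arrow C n (coh B U W (map g (positions B)))
    (subst B (map g (positions B)) U) (subst B (map g (positions B)) W).
Proof.
move=> wU wW sUW tUW fUW gB; split=> //.
apply: wf_coh => //; first by rewrite size_map.
- by move=> p Bp; rewrite lookup_map //; case: (gB p Bp).
- move=> p Bp p1; rewrite !lookup_map ?mem_psrc //; by case: (gB p Bp) => _ ->.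
- move=> p Bp p1; rewrite !lookup_map ?mem_ptgt //; by case: (gB p Bp) => _ _ ->.
Qed.

Lemma arrow_coherence C n B U W s t g :
  arrow (treeComp B) n U s t -> arrow (treeComp B) n W s t ->
  covers B U -> covers B W -> tree_morphism C B g ->
  arrow C n.+1 (coh B U W (map g (positions B)))
    (subst B (map g (positions B)) U) (subst B (map g (positions B)) W).
Proof.
case=> wU sU tU [wW sW tW] BU BW; apply: arrow_coh => //; [congruence | congruence |].
by right.
Qed.

Lemma var_morphism B B' :
  {subset positions B <= positions B'} -> tree_morphism (treeComp B') B var.
Proof. by move=> BB' p Bp; split=> //; apply: wf_var => //; apply: BB'. Qed.

Lemma chain_morphismP C m g :
  tree_morphism C (chain m) g <->
  (forall j, j <= m -> wf C 0 (g [:: j])) /\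
  (forall j, j < m -> arrow C 0 (g [:: j; 0]) (g [:: j]) (g [:: j.+1])).
Proof.
split=> [gm|[gv ge] p].
  split=> j jm; first by case: (gm _ (chain_vertex jm)).
  by case: (gm _ (chain_edge jm)) => *; split; auto.
by case/mem_chain=> [[j jm ->]|[j jm ->]]; [split; auto | case: (ge j jm)].
Qed.

Lemma full_chain m : full (chain m) 0 (var [:: 0]) (var [:: m]).
Proof.
case: m => [|m].
  by right; split=> q; rewrite in_supp_var below_vertex mem_leaf; split=> [->|/eqP].
left; split; first exact: tdim_chain.
split=> q; rewrite in_supp_var below_vertex /simg /timg /= ?size_nseq inE;
  by split=> [->|/eqP].
Qed.

Lemma subst_var_map V B (g : pos -> term V) p :
  p \in positions B -> subst B (map g (positions B)) (var p) = g p.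
Proof. exact: lookup_map. Qed.

Lemma arrow_ccomp C m g :
  tree_morphism C (chain m) g -> arrow C 0 (ccomp m g) (g [:: 0]) (g [:: m]).
Proof.
move=> gm; rewrite -(subst_var_map g (chain_vertex (leq0n m))).
rewrite -(subst_var_map g (chain_vertex (leqnn m))).
have wv j : j <= m -> wf (treeComp (chain m)) 0 (var [:: j]).
  by move=> jm; apply: wf_var => //; exact: chain_vertex.
by apply: (arrow_coh (wv 0 _) (wv m _)) gm => //; exact: full_chain.
Qed.

Lemma arrow_idc C x : wf C 0 x -> arrow C 0 (idc x) x x.
Proof.
move=> wx; apply: arrow_ccomp; apply/chain_morphismP.
by split=> [j _|//]; exact: wx.
Qed.

Lemma subst_ccomp V B (tau : seq (term V)) m g :
  subst B tau (ccomp m g) = ccomp m (subst B tau \o g).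
Proof. by rewrite /ccomp /= -map_comp. Qed.

Lemma eq_in_ccomp V m (g1 g2 : pos -> term V) :
  {in positions (chain m), g1 =1 g2} -> ccomp m g1 = ccomp m g2.
Proof. by move=> g12; congr coh; apply/eq_in_map. Qed.

Lemma subst_ucell V m (g : pos -> term V) :
  subst (chain m) (map g (positions (chain m))) (ucell m) = ccomp m g.
Proof. by rewrite ucellE subst_ccomp; apply: eq_in_ccomp => p mp; exact: subst_var_map. Qed.

(** * Surgery on chains *)

Section ChainSurgery.
Variable V : Type.

Definition shift (a : nat) (p : pos) : pos := if p is i :: q then (a + i) :: q else p.

Definition insert_at (a : nat) (M : term V) (g : pos -> term V) (p : pos) : term V :=
  match p with
  | [:: j] => g [:: if j <= a then j else j.-1]
  | [:: j; _] => if j < a then g [:: j; 0] else if j == a then M else g [:: j.-1; 0]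
  | _ => g p
  end.

Definition merge_at (a : nat) (g : pos -> term V) (p : pos) : term V :=
  match p with
  | [:: j] => g [:: if j <= a then j else j.+1]
  | [:: j; _] =>
      if j < a then g [:: j; 0] else if j == a then ccomp 2 (g \o shift a) else g [:: j.+1; 0]
  | _ => g p
  end.

Definition replace_edge (a : nat) (N : term V) (g : pos -> term V) (p : pos) : term V :=
  if p is [:: j; _] then (if j == a then N else g p) else g p.

Lemma replace_insert_at a M N g : replace_edge a N (insert_at a M g) =1 insert_at a N g.
Proof. by case=> [|j [|y []]] //=; case: ltngtP. Qed.

Lemma insert_at_last a n M g : a <= n -> insert_at a M g [:: n.+1] = g [:: n].
Proof. by move=> an; rewrite /= leqNgt ltnS an. Qed.

Lemma insert_at_loop a M g :
  [/\ insert_at a M g [:: a] = g [:: a], insert_at a M g [:: a.+1] = g [:: a]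
    & insert_at a M g [:: a; 0] = M].
Proof. by rewrite /= leqnn ltnn eqxx. Qed.

Lemma merge_at_last a n g : a <= n -> merge_at a g [:: n.+1] = g [:: n.+2].
Proof. by move=> an; rewrite /= leqNgt ltnS an. Qed.

End ChainSurgery.

Lemma shift_morphism C n a m g :
  a + m <= n -> tree_morphism C (chain n) g -> tree_morphism C (chain m) (g \o shift a).
Proof.
move=> amn /chain_morphismP[gv ge]; apply/chain_morphismP; split=> j jm /=.
  by apply: gv; lia.
by rewrite addnS; apply: ge; lia.
Qed.

Lemma insert_at_morphism C n a M g :
  a <= n -> tree_morphism C (chain n) g -> arrow C 0 M (g [:: a]) (g [:: a]) ->
  tree_morphism C (chain n.+1) (insert_at a M g).
Proof.
move=> an /chain_morphismP[gv ge] aM; apply/chain_morphismP; split=> j jn /=.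
  by apply: gv; case: ifP; lia.
case: ltngtP => ja.
- by apply: ge; lia.
- by case: j ja jn => // j ja jn; apply: ge; lia.
- by rewrite ja.
Qed.

Lemma merge_at_morphism C n a g :
  a <= n -> tree_morphism C (chain n.+2) g -> tree_morphism C (chain n.+1) (merge_at a g).
Proof.
move=> an gm; have /chain_morphismP[gv ge] := gm.
apply/chain_morphismP; split=> j jn /=.
  by apply: gv; case: ifP; lia.
case: ltngtP => ja.
- by apply: ge; lia.
- by apply: ge; lia.
- have a2n : a + 2 <= n.+2 by lia.
  by have := arrow_ccomp (shift_morphism a2n gm); rewrite /= addn0 addn2 ja.
Qed.

Lemma covers_merge_at n a : a <= n -> covers (chain n.+2) (ccomp n.+1 (merge_at a var)).
Proof.
move=> an; apply: covers_chain.
- apply: supported_ccomp => p /mem_chain[[j jn ->]|[j jn ->]] /=.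
    by apply/supported_var/chain_vertex; case: ifP; lia.
  case: ltngtP => ja; try by apply/supported_var/chain_edge; lia.
  apply: supported_ccomp => q /mem_chain[[i i2 ->]|[i i2 ->]];
    apply: supported_var; [apply: chain_vertex | apply: chain_edge]; lia.
- by apply/in_supp_ccomp; exists [:: 0]; rewrite ?chain_vertex //=; apply: in_supp_refl.
- move=> i i2; apply/in_supp_ccomp; case: (ltnP i a) => ia.
    exists [:: i; 0]; first by apply: chain_edge; lia.
    by rewrite /= ia; apply: in_supp_refl.
  case: (ltnP a.+1 i) => ai.
    exists [:: i.-1; 0]; first by apply: chain_edge; lia.
    by rewrite /= !ifF ?prednK; try lia; apply: in_supp_refl.
  exists [:: a; 0]; first by apply: chain_edge; lia.
  rewrite /= ltnn eqxx; apply/in_supp_ccomp; exists [:: i - a; 0]; first by apply: chain_edge; lia.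
  by rewrite /= subnKC //; apply: in_supp_refl.
Qed.

Lemma covers_insert_at n a :
  a <= n -> covers (chain n) (ccomp n.+1 (insert_at a (idc (var [:: a])) var)).
Proof.
move=> an; apply: covers_chain.
- apply: supported_ccomp => p /mem_chain[[j jn ->]|[j jn ->]] /=.
    by apply/supported_var/chain_vertex; case: ifP; lia.
  case: ltngtP => ja; try by apply/supported_var/chain_edge; lia.
  by apply: supported_ccomp => q _; apply/supported_var/chain_vertex.
- by apply/in_supp_ccomp; exists [:: 0]; rewrite ?chain_vertex //=; apply: in_supp_refl.
- move=> i i2; apply/in_supp_ccomp; case: (ltnP i a) => ia.
    exists [:: i; 0]; first by apply: chain_edge; lia.
    by rewrite /= ia; apply: in_supp_refl.
  exists [:: i.+1; 0]; first by apply: chain_edge; lia.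
  by rewrite /= !ifF; try lia; apply: in_supp_refl.
Qed.

Lemma subst_merge_at V n a (g : pos -> term V) :
  a <= n ->
  subst (chain n.+2) (map g (positions (chain n.+2))) (ccomp n.+1 (merge_at a var)) =
  ccomp n.+1 (merge_at a g).
Proof.
move=> an; rewrite subst_ccomp; apply: eq_in_ccomp => p.
case/mem_chain=> [[j jn ->]|[j jn ->]]; rewrite /comp ![merge_at _ _ _]/=.
  by rewrite subst_var_map //; apply: chain_vertex; case: ifP; lia.
case: ltngtP => ja; try by rewrite subst_var_map //; apply: chain_edge; lia.
rewrite subst_ccomp; apply: eq_in_ccomp => q /mem_chain[[i i2 ->]|[i i2 ->]];
  rewrite /comp subst_var_map //; [apply: chain_vertex | apply: chain_edge]; lia.
Qed.

Lemma subst_insert_at V n a (g : pos -> term V) :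
  a <= n ->
  subst (chain n) (map g (positions (chain n))) (ccomp n.+1 (insert_at a (idc (var [:: a])) var)) =
  ccomp n.+1 (insert_at a (idc (g [:: a])) g).
Proof.
move=> an; rewrite subst_ccomp; apply: eq_in_ccomp => p.
case/mem_chain=> [[j jn ->]|[j jn ->]]; rewrite /comp ![insert_at _ _ _ _]/=.
  by rewrite subst_var_map //; apply: chain_vertex; case: ifP; lia.
case: ltngtP => ja; try by rewrite subst_var_map //; apply: chain_edge; lia.
rewrite /idc subst_ccomp; apply: eq_in_ccomp => q _.
exact: subst_var_map (chain_vertex an).
Qed.

(** * Whiskering and vertical composition *)

Lemma bdry1_br L : bdry 1 (br L) = chain (size L).
Proof. by rewrite /chain /=; congr br; elim: L => //= [[T]] L ->. Qed.

Lemma simg1_br L : simg 1 (br L) = positions (chain (size L)).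
Proof.
by rewrite /simg bdry1_br map_id_in // => p /mem_chain[[j _ ->]|[j _ ->]].
Qed.

Definition whisker_children (a b : nat) : seq tree := nseq a leaf ++ chain 1 :: nseq b leaf.

Definition whisker_tree (a b : nat) : tree := br (whisker_children a b).

Lemma size_whisker_children a b : size (whisker_children a b) = (a + b).+1.
Proof. by rewrite size_cat /= !size_nseq addnS. Qed.

Lemma nth_whisker_children a b j :
  nth leaf (whisker_children a b) j = if j == a then chain 1 else leaf.
Proof.
rewrite nth_cat size_nseq nth_nseq if_same; case: ltngtP => // [ja|->]; last by rewrite subnn.
by rewrite -(subnSK ja) /= nth_nseq if_same.
Qed.

Lemma mem_whisker_tree a b p :
  p \in positions (whisker_tree a b) <->
  [\/ exists2 j, j <= (a + b).+1 & p = [:: j], exists2 j, j <= a + b & p = [:: j; 0],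
      p = [:: a; 1] | p = [:: a; 0; 0]].
Proof.
rewrite mem_br size_whisker_children; split.
  case=> [|[j [q [jn]]]]; first by constructor 1.
  rewrite nth_whisker_children; case: eqP => [-> | _].
    rewrite !inE => /or3P[] /eqP-> ->; [constructor 2 | constructor 3 | constructor 4] => //.
    by exists a; first lia.
  by rewrite mem_leaf => /eqP-> ->; constructor 2; exists j.
case=> [? | [j jn ->] | -> | ->]; [by left | right..].
- by exists j, [:: 0]; rewrite nth_whisker_children; case: eqP.
- by exists a, [:: 1]; rewrite nth_whisker_children eqxx; split; first lia.
- by exists a, [:: 0; 0]; rewrite nth_whisker_children eqxx; split; first lia.
Qed.

Lemma tdim_whisker_tree a b : tdim (whisker_tree a b) = 2.
Proof.
have tdim_leaves c d :
    foldr (fun T d => maxn (tdim T).+1 d) d (nseq c leaf) = if c is 0 then d else maxn 1 d.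
  by elim: c => //= c ->; case: c => //= c; lia.
by rewrite tdim_br foldr_cat /= !tdim_leaves; case: a; case: b.
Qed.

Lemma in_supp_timg1 L q :
  in_supp q (ccomp (size L) (var \o tincl 1 (br L))) <-> q \in timg 1 (br L).
Proof.
rewrite /timg bdry1_br; split=> [/in_supp_ccomp[p mp /in_supp_var]|/mapP[p mp ->]].
  case/mem_chain: mp => [[j jL ->] /below_vertex ->|[j jL ->]].
    by apply/mapP; exists [:: j]; rewrite ?chain_vertex.
  rewrite /comp [tincl _ _ _]/=; case E: (nth leaf L j) => [L'] /below_edge[] ->.
  - by apply/mapP; exists [:: j; 0]; rewrite ?chain_edge //= E.
  - by apply/mapP; exists [:: j]; rewrite ?chain_vertex // ltnW.
  - by apply/mapP; exists [:: j.+1]; rewrite ?chain_vertex.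
by apply/in_supp_ccomp; exists p => //; apply: in_supp_refl.
Qed.

Lemma chain_sub_whisker_tree a b :
  {subset positions (chain (a + b).+1) <= positions (whisker_tree a b)}.
Proof.
by move=> p /mem_chain[[j jn ->]|[j jn ->]]; apply/mem_whisker_tree;
  [constructor 1; exists j | constructor 2; exists j].
Qed.

Lemma mem_whisker_target a b j :
  j < (a + b).+1 -> [:: j; nat_of_bool (j == a)] \in positions (whisker_tree a b).
Proof.
move=> jn; apply/mem_whisker_tree.
by case: eqP => [->|_]; [constructor 3 | constructor 2; exists j].
Qed.

Lemma tincl_whisker_edge a b j :
  tincl 1 (whisker_tree a b) [:: j; 0] = [:: j; nat_of_bool (j == a)].
Proof. by rewrite /= nth_whisker_children; case: eqP. Qed.

Definition whisker_map {V : Type} (g : pos -> term V) (N alpha : term V) (p : pos) : term V :=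
  match p with [:: _; 1] => N | [:: _; _; _] => alpha | _ => g p end.

Definition whisker {V : Type} (a b : nat) (g : pos -> term V) (N alpha : term V) : term V :=
  coh (whisker_tree a b) (ucell (a + b).+1)
    (ccomp (a + b).+1 (var \o tincl 1 (whisker_tree a b)))
    (map (whisker_map g N alpha) (positions (whisker_tree a b))).

Section Whiskering.
Variables (C : computad) (a b : nat) (g : pos -> term (gen C)) (N alpha : term (gen C)).

Hypotheses (gm : tree_morphism C (chain (a + b).+1) g)
  (aN : arrow C 0 N (g [:: a]) (g [:: a.+1])) (aalpha : arrow C 1 alpha (g [:: a; 0]) N).

Lemma whisker_map_morphism : tree_morphism C (whisker_tree a b) (whisker_map g N alpha).
Proof.
have /chain_morphismP[gv ge] := gm; have [wN sN tN] := aN; have [wa sa ta] := aalpha.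
move=> p /mem_whisker_tree[[j jn ->]|[j jn ->]|->|->]; first by split=> //; apply: gv.
- by have [] := ge j jn; split.
- by split.
- by split.
Qed.

Lemma full_whisker :
  full (whisker_tree a b) 1 (ucell (a + b).+1)
    (ccomp (a + b).+1 (var \o tincl 1 (whisker_tree a b))).
Proof.
left; split; first exact: tdim_whisker_tree.
split=> q; first by rewrite simg1_br size_whisker_children; exact: covers_ucell.
by rewrite -in_supp_timg1 size_whisker_children.
Qed.

Lemma arrow_whisker :
  arrow C 1 (whisker a b g N alpha) (ccomp (a + b).+1 g) (ccomp (a + b).+1 (replace_edge a N g)).
Proof.
have sub := @chain_sub_whisker_tree a b.
have [wU sU tU] := arrow_ccomp (var_morphism sub).
have [wW sW tW] : arrow (treeComp (whisker_tree a b)) 0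
    (ccomp (a + b).+1 (var \o tincl 1 (whisker_tree a b))) (var [:: 0]) (var [:: (a + b).+1]).
  apply/arrow_ccomp/chain_morphismP; split=> j jn.
    by apply: wf_var => //; apply/sub/chain_vertex.
  by rewrite /comp tincl_whisker_edge; split=> //; apply: wf_var => //; apply: mem_whisker_target.
rewrite /whisker ucellE.
have [w s t] := arrow_coh wU wW (fun _ => etrans sU (esym sW)) (fun _ => etrans tU (esym tW))
  full_whisker whisker_map_morphism.
split=> //; [rewrite s | rewrite t]; rewrite subst_ccomp; apply: eq_in_ccomp => p.
  case/mem_chain=> [[j jn ->]|[j jn ->]];
    by rewrite /comp subst_var_map // sub ?chain_vertex ?chain_edge.
case/mem_chain=> [[j jn ->]|[j jn ->]]; rewrite /comp ?tincl_whisker_edge subst_var_map //.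
- by rewrite sub ?chain_vertex.
- by rewrite /=; case: eqP.
- by rewrite mem_whisker_target //; lia.
Qed.

End Whiskering.

Definition vertical_tree (m : nat) : tree := br [:: chain m].

Lemma mem_vertical_tree m p :
  p \in positions (vertical_tree m) <->
  [\/ p = [:: 0], p = [:: 1], exists2 j, j <= m & p = [:: 0; j]
    | exists2 j, j < m & p = [:: 0; j; 0]].
Proof.
rewrite mem_br; split.
  case=> [[j j1 ->]|[j [q [j1 mq ->]]]].
    by case: j j1 => [|[|]] // _; [constructor 1 | constructor 2].
  case: j j1 mq => // _ /mem_chain[[j jm ->]|[j jm ->]];
    by [constructor 3; exists j | constructor 4; exists j].
case=> [->|->|[j jm ->]|[j jm ->]]; [by left; exists 0 | by left; exists 1 | right..].
- by exists 0, [:: j]; rewrite chain_vertex.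
- by exists 0, [:: j; 0]; rewrite chain_edge.
Qed.

Lemma full_vertical_tree m :
  0 < m -> full (vertical_tree m) 1 (var [:: 0; 0]) (var [:: 0; m]).
Proof.
move=> m_gt0; left; split; first by rewrite tdim_br; move: (tdim_chain m_gt0) => /= ->.
rewrite /simg /timg /= size_nseq.
by split=> q; rewrite in_supp_var below_edge !inE;
  split=> [[]->|/or3P[]/eqP->]; rewrite ?eqxx ?orbT //; constructor.
Qed.

Definition vertical_map {V : Type} (x y : term V) (a d : nat -> term V) (p : pos) : term V :=
  match p with [:: 1] => y | [:: _; j] => a j | [:: _; j; _] => d j | _ => x end.

Definition vcomp {V : Type} (m : nat) (x y : term V) (a d : nat -> term V) : term V :=
  coh (vertical_tree m) (var [:: 0; 0]) (var [:: 0; m])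
    (map (vertical_map x y a d) (positions (vertical_tree m))).

Section VerticalComposite.
Variables (C : computad) (m : nat) (x y : term (gen C)) (a d : nat -> term (gen C)).

Hypotheses (m_gt0 : 0 < m) (wx : wf C 0 x) (wy : wf C 0 y)
  (aa : forall j, j <= m -> arrow C 0 (a j) x y)
  (ad : forall j, j < m -> arrow C 1 (d j) (a j) (a j.+1)).

Lemma vertical_map_morphism : tree_morphism C (vertical_tree m) (vertical_map x y a d).
Proof.
move=> p /mem_vertical_tree[->|->|[j jm ->]|[j jm ->]] //.
- by have [] := aa jm; split.
- by have [] := ad jm; split.
Qed.

Lemma arrow_vcomp : arrow C 1 (vcomp m x y a d) (a 0) (a m).
Proof.
have mem_col j : j <= m -> [:: 0; j] \in positions (vertical_tree m).
  by move=> jm; apply/mem_vertical_tree; constructor 3; exists j.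
have wcol j : j <= m -> wf (treeComp (vertical_tree m)) 1 (var [:: 0; j]).
  by move=> jm; apply: wf_var => //; apply: mem_col.
have [] := arrow_coh (wcol 0 (leq0n m)) (wcol m (leqnn m)) (fun _ => erefl) (fun _ => erefl)
  (full_vertical_tree m_gt0) vertical_map_morphism.
by rewrite !subst_var_map ?mem_col.
Qed.

End VerticalComposite.

(** * The telescope *)

Local Notation X j := (var (TX j)).

Definition fg (i : nat) : term telgen := ccomp 2 (hA i).

(* [zigzag c] is f_1 ... f_c g_c ... g_1 and [zigzag_with c M] is f_1 ... f_c M g_c ... g_1;
   [zigzag 0] computes to [idc (X 0)]. *)
Definition zigzag (c : nat) : term telgen := ccomp c.*2 (htel c).

Definition zigzag_with (c : nat) (M : term telgen) : term telgen :=
  ccomp c.*2.+1 (insert_at c M (htel c)).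

Lemma htel_mid c : htel c [:: c] = X c.
Proof. by rewrite /= leqnn. Qed.

Lemma htel_end c : htel c [:: c.*2] = X 0.
Proof. by rewrite /=; case: ifP => c2; congr (var (TX _)); lia. Qed.

Lemma htel_morphism k c : c <= k -> tree_morphism (Tel k) (chain c.*2) (htel c).
Proof.
move=> ck; apply/chain_morphismP; split=> j jc.
  by apply: wf_var => //=; case: ifP; lia.
rewrite /=; case: ifP => jc'; (split; first by apply: wf_var => //=; lia);
  by rewrite /=; try case: ifP => ?; congr (var (TX _)); lia.
Qed.

Lemma arrow_TA k i :
  0 < i <= k -> arrow (Tel k) 1 (var (TA i)) (fg i) (idc (X i.-1)).
Proof. by move=> ik; split=> //; apply: wf_var. Qed.

Lemma arrow_fg k i : 0 < i <= k -> arrow (Tel k) 0 (fg i) (X i.-1) (X i.-1).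
Proof.
move=> ik; apply: arrow_ccomp; apply/chain_morphismP; split.
  by case=> [|[|[|j]]] // _; apply: wf_var => //=; lia.
by case=> [|[|j]] // _; split=> //; apply: wf_var.
Qed.

Lemma merge_at_htel c :
  {in positions (chain c.*2.+1),
    merge_at c (htel c.+1) =1 insert_at c (fg c.+1) (htel c)}.
Proof.
move=> p /mem_chain[[j jc ->]|[j jc ->]] /=.
  by case: (leqP j c) => jc'; repeat case: ifP => ?; congr (var (TX _)); lia.
case: ltngtP => jc'.
- by rewrite ifT //; lia.
- by rewrite !ifF; try lia; congr (var (TG _)); lia.
- subst j; apply: eq_in_ccomp => q /mem_chain[[i i2 ->]|[i i2 ->]] /=.
    by case: i i2 => [|[|[|i]]] // _ /=; rewrite ?addn0 ?addn1 ?addn2;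
      repeat case: ifP => ? //; congr (var (TX _)); lia.
  by case: i i2 => [|[|i]] // _ /=; rewrite ?addn0 ?addn1 ?ltnSn ?ltnn //;
    congr (var (TG _)); lia.
Qed.

Definition regroup (c : nat) : term telgen :=
  coh (chain c.*2.+2) (ucell c.*2.+2) (ccomp c.*2.+1 (merge_at c var))
    (map (htel c.+1) (positions (chain c.*2.+2))).

Definition cancel_unit (c : nat) : term telgen :=
  coh (chain c.*2) (ccomp c.*2.+1 (insert_at c (idc (var [:: c])) var)) (ucell c.*2)
    (map (htel c) (positions (chain c.*2))).

Definition contract (c : nat) : term telgen :=
  whisker c c (insert_at c (fg c.+1) (htel c)) (idc (X c)) (var (TA c.+1)).

Lemma var_chain_morphism m : tree_morphism (treeComp (chain m)) (chain m) var.
Proof. exact: var_morphism. Qed.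

Lemma arrow_regroup k c :
  c < k -> arrow (Tel k) 1 (regroup c) (zigzag c.+1) (zigzag_with c (fg c.+1)).
Proof.
move=> ck; have cc : c <= c.*2 by lia.
have aW : arrow (treeComp (chain c.*2.+2)) 0 (ccomp c.*2.+1 (merge_at c var))
    (var [:: 0]) (var [:: c.*2.+2]).
  by have := arrow_ccomp (merge_at_morphism cc (@var_chain_morphism _)); rewrite merge_at_last.
have := arrow_coherence (arrow_ccomp (@var_chain_morphism _)) aW (covers_ucell _)
  (covers_merge_at cc) (htel_morphism ck).
by rewrite -ucellE subst_ucell subst_merge_at // (eq_in_ccomp (@merge_at_htel c)).
Qed.

Lemma arrow_cancel_unit k c :
  c <= k -> arrow (Tel k) 1 (cancel_unit c) (zigzag_with c (idc (X c))) (zigzag c).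
Proof.
move=> ck; have cc : c <= c.*2 by lia.
have aU : arrow (treeComp (chain c.*2)) 0 (ccomp c.*2.+1 (insert_at c (idc (var [:: c])) var))
    (var [:: 0]) (var [:: c.*2]).
  have aI := arrow_idc (wf_var (treeComp (chain c.*2)) 0 [:: c] (chain_vertex cc) erefl).
  by have := arrow_ccomp (insert_at_morphism cc (@var_chain_morphism _) aI); rewrite insert_at_last.
have := arrow_coherence aU (arrow_ccomp (@var_chain_morphism _)) (covers_insert_at cc)
  (covers_ucell _) (htel_morphism ck).
by rewrite -ucellE subst_ucell subst_insert_at // htel_mid.
Qed.

Lemma arrow_contract k c :
  c < k -> arrow (Tel k) 1 (contract c) (zigzag_with c (fg c.+1)) (zigzag_with c (idc (X c))).
Proof.
move=> ck; have [ins_a ins_a1 ins_edge] := insert_at_loop c (fg c.+1) (htel c).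
have gm : tree_morphism (Tel k) (chain (c + c).+1) (insert_at c (fg c.+1) (htel c)).
  rewrite addnn; apply: insert_at_morphism (htel_morphism (ltnW ck)) _; first lia.
  by rewrite htel_mid; apply: arrow_fg; lia.
have := @arrow_whisker (Tel k) c c _ (idc (X c)) (var (TA c.+1)) gm.
rewrite ins_a ins_a1 ins_edge htel_mid /zigzag_with addnn.
rewrite (eq_in_ccomp (fun p _ => replace_insert_at _ _ _ _ p)); apply.
  by apply/arrow_idc/wf_var => /=; lia.
by apply: arrow_TA; lia.
Qed.

Lemma arrow_zigzag k c : c <= k -> arrow (Tel k) 0 (zigzag c) (X 0) (X 0).
Proof. by move=> ck; have := arrow_ccomp (htel_morphism ck); rewrite htel_end. Qed.

Lemma arrow_zigzag_with k c M :
  c <= k -> arrow (Tel k) 0 M (X c) (X c) -> arrow (Tel k) 0 (zigzag_with c M) (X 0) (X 0).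
Proof.
move=> ck aM; have cc : c <= c.*2 by lia.
rewrite -htel_mid in aM.
have := arrow_ccomp (insert_at_morphism cc (htel_morphism ck) aM).
by rewrite insert_at_last ?htel_end.
Qed.

Definition tel_step (c : nat) : term telgen :=
  vcomp 3 (X 0) (X 0)
    (nth (zigzag c) [:: zigzag c.+1; zigzag_with c (fg c.+1); zigzag_with c (idc (X c))])
    (nth (regroup c) [:: regroup c; contract c; cancel_unit c]).

Lemma arrow_tel_step k c : c < k -> arrow (Tel k) 1 (tel_step c) (zigzag c.+1) (zigzag c).
Proof.
move=> ck; have ck' := ltnW ck.
apply: arrow_vcomp => //; try by apply: wf_var => /=; lia.
  case=> [|[|[|[|]]]] // _ /=; [exact: arrow_zigzag ck | | | exact: arrow_zigzag ck'].
    by apply: (arrow_zigzag_with ck'); apply: arrow_fg; lia.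
  by apply: (arrow_zigzag_with ck'); apply/arrow_idc/wf_var.
case=> [|[|[|]]] // _; [exact: arrow_regroup | exact: arrow_contract | exact: arrow_cancel_unit].
Qed.

Definition tel (k : nat) : term telgen :=
  vcomp k (X 0) (X 0) (fun j => zigzag (k - j)) (fun j => tel_step (k - j.+1)).

Lemma arrow_tel k : 0 < k -> arrow (Tel k) 1 (tel k) (zigzag k) (idc (X 0)).
Proof.
move=> k_gt0; have := @arrow_vcomp (Tel k) k (X 0) (X 0) (fun j => zigzag (k - j))
  (fun j => tel_step (k - j.+1)) k_gt0.
rewrite subn0 subnn; apply; try by apply: wf_var.
  by move=> j jk; apply: arrow_zigzag; exact: leq_subr.
by move=> j jk; rewrite -(subnSK jk); apply: arrow_tel_step; lia.
Qed.

Theorem theorem5p2 : forall k : nat, 0 < k ->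
  exists t : term telgen,
    wf (Tel k) 2 t /\
    csrc (Tel k) t = subst (chain k.*2) (telsub k) (ucell k.*2) /\
    ctgt (Tel k) t = subst leaf [:: var (TX 0)] idcell.
Proof.
move=> k k_gt0; have [wt st tt] := arrow_tel k_gt0.
by exists (tel k); rewrite st tt /telsub subst_ucell.
Qed.
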